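(* Let $V$ be a preference profile over a finite candidate set $C$ with a fixed tie-breaking order, and let $w$ be the 3-Approval winner at $V$. Let $Q$ be the set of candidates $x$ such that some voter $i$ with $w\in\mathrm{top}_3(v_i)$ (a Type 2 manipulator) manipulates in favour of $x$, i.e. has a vote $v_i'$ with $3\text{-App}(V_{-i},v_i')=x$ and $x\succ_i w$. Then $|Q|\le 2$.
   Context: Each voter $i$ has a strict linear order $v_i$ over $C$; $x\succ_i y$ means $i$ ranks $x$ above $y$; $\mathrm{top}_3(v)$ is the set of the three highest-ranked candidates of $v$. 3-Approval ($3\text{-App}$): each candidate gets one point from each voter ranking her among his top three; the highest score wins, ties broken in favour of the candidate highest in the fixed strict linear order on $C$. $(V_{-i},v_i')$ denotes $V$ with $v_i$ replaced by $v_i'$. *)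

From mathcomp Require Import all_boot all_order.
Set Implicit Arguments. Unset Strict Implicit. Unset Printing Implicit Defensive.

(* A strict linear order over the finite candidate set C is represented by a
   ranking: an injective (hence bijective) map from C to positions
   'I_#|C|, position 0 being the top.  x >_v y  iff  v x < v y. *)
Definition ranking (C : finType) := {ffun C -> 'I_#|C|}.

Definition is_vote (C : finType) (v : ranking C) : bool := injectiveb v.

Definition prefers (C : finType) (v : ranking C) (x y : C) : bool := v x < v y.

Definition top3 (C : finType) (v : ranking C) : {set C} := [set x | v x < 3].

Definition score3 (C : finType) (n : nat) (V : 'I_n -> ranking C) (x : C) : nat :=
  #|[set i : 'I_n | x \in top3 (V i)]|.

Definition app3_winner (C : finType) (tb : ranking C) (n : nat)
  (V : 'I_n -> ranking C) (x : C) : bool :=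
  [forall y, (score3 V y < score3 V x) ||
             ((score3 V y == score3 V x) && (tb x <= tb y))].

Definition upd (C : finType) (n : nat) (V : 'I_n -> ranking C) (i : 'I_n)
  (v' : ranking C) : 'I_n -> ranking C :=
  fun j => if j == i then v' else V j.

Definition type2_targets (C : finType) (tb : ranking C) (n : nat)
  (V : 'I_n -> ranking C) (w : C) : {set C} :=
  [set x | [exists i : 'I_n, (w \in top3 (V i)) &&
     [exists v' : ranking C, [&& is_vote v', app3_winner tb (upd V i v') x
                               & prefers (V i) x w]]]].

(** A Type 2 manipulator i for x has both w and x in top3 (V i), so of any two
    further candidates at least one, y, lies outside top3 (V i).  Changing the
    vote of i can only lower the score of x and raise that of y, so if x wins
    after the change, x already beat y at V in the lexicographic order
    "higher score, then higher in tb".  Three targets would each beat one of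
    the other two, which is impossible for a strict order. *)

From mathcomp Require Import all_boot all_order.
From mathcomp Require Import zify.
Set Implicit Arguments. Unset Strict Implicit.

Lemma irr_trans_no_cyclic_triple (T : Type) (r : rel T) :
  irreflexive r -> transitive r -> forall a b c,
  ~~ [&& r a b || r a c, r b a || r b c & r c a || r c b].
Proof.
move=> irr tr a b c; apply/negP.
have no2 x y : r x y -> r y x -> False.
  by move=> xy yx; move: (tr _ _ _ xy yx); rewrite irr.
have no3 x y z : r x y -> r y z -> r z x -> False.
  by move=> xy yz; apply: no2; apply: tr xy yz.
case/and3P=> /orP[ab|ac] /orP[ba|bc] /orP[ca|cb]; by [
  apply: no2 ab ba | apply: no2 ac ca | apply: no2 bc cb |
  apply: no3 ab bc ca | apply: no3 ac cb ba].
Qed.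

Lemma card_top3 (C : finType) (v : ranking C) : is_vote v -> #|top3 v| <= 3.
Proof.
move=> /injectiveP v_inj.
pose pos3 x : 'I_3 := inord (v x).
have pos3E x : x \in top3 v -> val (pos3 x) = v x.
  by rewrite inE => x3; rewrite /pos3 /= inordK.
rewrite -(card_in_imset (f := pos3)).
  by apply: leq_trans (max_card _) _; rewrite card_ord.
move=> x y x3 y3 /(congr1 val); rewrite !pos3E // => vxy.
exact/v_inj/val_inj.
Qed.

Lemma uniq_top3_size (C : finType) (v : ranking C) (s : seq C) :
  is_vote v -> uniq s -> {subset s <= top3 v} -> size s <= 3.
Proof.
move=> v_vote /card_uniqP <- s_top3.
by apply: leq_trans (card_top3 v_vote); apply/subset_leq_card/subsetP.
Qed.

Section ThreeApproval.

Variables (C : finType) (tb : ranking C) (n : nat) (V : 'I_n -> ranking C).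

(* The comparison of [app3_winner] with the tie-break made strict, so that
   [beats U] is a strict order even if [tb] is not injective. *)
Definition beats (U : 'I_n -> ranking C) (x y : C) : bool :=
  (score3 U y < score3 U x) || (score3 U y == score3 U x) && (tb x < tb y).

Lemma beats_irr : irreflexive (beats V).
Proof. by move=> x; rewrite /beats !ltnn andbF. Qed.

Lemma beats_trans : transitive (beats V).
Proof. by move=> y x z; rewrite /beats; lia. Qed.

Lemma app3_winner_beats (U : 'I_n -> ranking C) (x y : C) :
  is_vote tb -> app3_winner tb U x -> y != x -> beats U x y.
Proof.
move=> /injectiveP tb_inj /forallP /(_ y) win yx.
have tb_neq : tb x != tb y :> nat.
  by apply: contra yx => /eqP /val_inj /tb_inj ->.
by move: win tb_neq; rewrite /beats; lia.
Qed.

Lemma score3_upd_top3 (i : 'I_n) (v' : ranking C) (x : C) :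
  x \in top3 (V i) -> score3 (upd V i v') x <= score3 V x.
Proof.
rewrite inE => x_top; apply/subset_leq_card/subsetP => j; rewrite !inE /upd.
by case: eqP => // ->.
Qed.

Lemma score3_upd_ntop3 (i : 'I_n) (v' : ranking C) (y : C) :
  y \notin top3 (V i) -> score3 V y <= score3 (upd V i v') y.
Proof.
rewrite inE => y_ntop; apply/subset_leq_card/subsetP => j; rewrite !inE /upd.
by case: eqP => // -> y_top; rewrite y_top in y_ntop.
Qed.

Lemma upd_winner_beats (i : 'I_n) (v' : ranking C) (x y : C) :
  is_vote tb -> app3_winner tb (upd V i v') x ->
  x \in top3 (V i) -> y \notin top3 (V i) -> beats V x y.
Proof.
move=> tb_vote win x_top y_ntop.
have yx : y != x by apply: contraNneq y_ntop => ->.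
have := app3_winner_beats tb_vote win yx.
have := score3_upd_top3 v' x_top; have := score3_upd_ntop3 v' y_ntop.
by rewrite /beats; lia.
Qed.

Lemma type2_targetsP (w x : C) :
  reflect (exists i v', [/\ w \in top3 (V i), is_vote v',
                            app3_winner tb (upd V i v') x & prefers (V i) x w])
          (x \in type2_targets tb V w).
Proof.
rewrite inE; apply: (iffP existsP) => [[i /andP[w_top /existsP[v']]]|].
  by case/and3P=> *; exists i, v'.
by move=> [i [v' [w_top v'_vote win pref]]]; exists i; rewrite w_top;
   apply/existsP; exists v'; rewrite v'_vote win pref.
Qed.

Lemma type2_target_neq (w x : C) : x \in type2_targets tb V w -> x != w.
Proof.
case/type2_targetsP=> i [v' [_ _ _]].
by apply: contraTneq => ->; rewrite /prefers ltnn.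
Qed.

Lemma type2_target_beats (w x y z : C) :
  is_vote tb -> (forall i, is_vote (V i)) ->
  x \in type2_targets tb V w -> uniq [:: w; x; y; z] ->
  beats V x y || beats V x z.
Proof.
move=> tb_vote V_vote /type2_targetsP [i [v' [w_top _ win pref]]] wxyz.
have x_top : x \in top3 (V i) by move: w_top pref; rewrite /prefers !inE; lia.
have [y_top|y_ntop] := boolP (y \in top3 (V i)); last first.
  by rewrite (upd_winner_beats tb_vote win x_top y_ntop).
have [z_top|z_ntop] := boolP (z \in top3 (V i)); last first.
  by rewrite (upd_winner_beats tb_vote win x_top z_ntop) orbT.
suff : size [:: w; x; y; z] <= 3 by [].
apply: uniq_top3_size (V_vote i) wxyz _.
by apply/allP; rewrite /= w_top x_top y_top z_top.
Qed.

End ThreeApproval.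

Theorem mainTheorem11 (C : finType) (tb : ranking C) (n : nat)
  (V : 'I_n -> ranking C) (w : C) :
  is_vote tb -> (forall i, is_vote (V i)) ->
  app3_winner tb V w ->
  #|type2_targets tb V w| <= 2.
Proof.
(* The bound holds for every candidate w, winner or not. *)
move=> tb_vote V_vote _; rewrite leqNgt; apply/negP.
case/card_gt2P=> [a [b [c [[Qa Qb Qc] [ab bc ca]]]]].
have [ba cb ac] : [/\ b != a, c != b & a != c].
  by rewrite eq_sym ab eq_sym bc eq_sym ca.
have [aw bw cw] := And3 (type2_target_neq Qa) (type2_target_neq Qb)
                        (type2_target_neq Qc).
apply/negP: (irr_trans_no_cyclic_triple (beats_irr tb V)
                                        (@beats_trans _ tb _ V) a b c).
rewrite !(@type2_target_beats _ _ _ _ w _ _ _ tb_vote V_vote) //=.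
all: by rewrite !inE !negb_or !(eq_sym w) aw bw cw ?ab ?ba ?bc ?cb ?ca ?ac.
Qed.
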